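(* Let $X$ be a finite set and $F_X:\mathbf{pow}(X)\to\mathbb{R}$ a filtration. Then for every $\sigma\in\mathbf{pow}(X)$, $$F_X(\sigma)=\min\{T_X(\sigma)\mid T_X \text{ is a tree filtration over }X\text{ with }T_X(\tau)\geq F_X(\tau)\text{ for all }\tau\in\mathbf{pow}(X)\},$$ and the minimum may be taken over a finite set of such tree filtrations.
   Context: $\mathbf{pow}(X)$ is the set of nonempty subsets of $X$. A filtration over $X$ is an order-preserving map $F_X:(\mathbf{pow}(X),\subset)\to(\mathbb{R},\leq)$. A symmetric ultranetwork over $X$ is a map $U_X:X\times X\to\mathbb{R}$ with $U_X(x,x')=U_X(x',x)$ and $U_X(x,x'')\leq\max\{U_X(x,x'),U_X(x',x'')\}$ for all $x,x',x''\in X$. A tree filtration is a filtration of the form $T_X(\sigma)=\max_{x,x'\in\sigma}U_X(x,x')$ for some symmetric ultranetwork $U_X$ (its Vietoris–Rips filtration). *)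

From mathcomp Require Import all_boot all_order all_algebra.
From mathcomp Require Export reals.
Set Implicit Arguments. Unset Strict Implicit. Unset Printing Implicit Defensive.
Import Order.TTheory GRing.Theory Num.Theory.
Local Open Scope ring_scope.

(* Functions on pow(X) are represented as functions {set X} -> R; only their
   values on nonempty subsets matter. *)

Definition filtration (R : realType) (X : finType) (F : {set X} -> R) : Prop :=
  forall s t : {set X}, s != set0 -> t != set0 -> s \subset t -> F s <= F t.

Definition sym_ultranetwork (R : realType) (X : finType) (U : X -> X -> R) : Prop :=
  (forall x x', U x x' = U x' x) /\
  (forall x x' x'', U x x'' <= Num.max (U x x') (U x' x'')).

(* T is the Vietoris-Rips filtration of U: T(s) = max_{x,x' in s} U(x,x')
   for every nonempty s (the maximum written out). *)
Definition is_VR_of (R : realType) (X : finType) (U : X -> X -> R)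
    (T : {set X} -> R) : Prop :=
  forall s : {set X}, s != set0 ->
    (exists x x', [/\ x \in s, x' \in s & T s = U x x']) /\
    (forall x x', x \in s -> x' \in s -> U x x' <= T s).

Definition tree_filtration (R : realType) (X : finType) (T : {set X} -> R) : Prop :=
  exists U : X -> X -> R, sym_ultranetwork U /\ is_VR_of U T.

Definition dominates (R : realType) (X : finType) (T F : {set X} -> R) : Prop :=
  forall t : {set X}, t != set0 -> F t <= T t.

(* A filtration F is dominated by the tree filtration that equals F(s) on the
   subsets of s and F(X) elsewhere: it is the Vietoris-Rips filtration of the
   ultranetwork with value F(s) on s x s and F(X) off it, monotonicity of F
   gives domination, and it agrees with F at s.  One such tree filtration per
   subset s yields the finite family. *)
From mathcomp Require Import all_boot all_order all_algebra.
From mathcomp Require Import reals.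
Set Implicit Arguments. Unset Strict Implicit. Unset Printing Implicit Defensive.
Import Order.TTheory GRing.Theory Num.Theory.
Local Open Scope ring_scope.

Section StepUltranetwork.
Variables (R : realType) (X : finType) (A : {set X}) (a b : R).
Hypothesis le_ab : A != set0 -> a <= b.

Definition step_ultranetwork (x y : X) : R :=
  if (x \in A) && (y \in A) then a else b.

Definition step_filtration (t : {set X}) : R :=
  if t \subset A then a else b.

Lemma sym_ultranetwork_step : sym_ultranetwork step_ultranetwork.
Proof.
split=> [x y | x y z]; first by rewrite /step_ultranetwork andbC.
rewrite /step_ultranetwork.
case: (boolP (x \in A)) => xA; case: (y \in A); case: (z \in A);
  rewrite /= ?le_max ?lexx ?orbT //.
by rewrite le_ab //; apply/set0Pn; exists x.
Qed.

Lemma is_VR_of_step : is_VR_of step_ultranetwork step_filtration.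
Proof.
move=> t /set0Pn[x0 x0t]; rewrite /step_filtration /step_ultranetwork.
have [tA | /subsetPn[x xt xNA]] := boolP (t \subset A).
  split=> [|x y xt yt]; last by rewrite !(subsetP tA).
  by exists x0, x0; rewrite !(subsetP tA).
split=> [|y z _ _]; first by exists x, x; rewrite (negbTE xNA).
by case: ifP => // /andP[yA _]; apply: le_ab; apply/set0Pn; exists y.
Qed.

Lemma tree_filtration_step : tree_filtration step_filtration.
Proof. by exists step_ultranetwork; split; [exact: sym_ultranetwork_step | exact: is_VR_of_step]. Qed.

End StepUltranetwork.

Section StepDominates.
Variables (R : realType) (X : finType) (F : {set X} -> R).
Hypothesis filtF : filtration F.

Lemma filtration_le_setT (t : {set X}) : t != set0 -> F t <= F setT.
Proof.
move=> t0; apply: filtF; rewrite ?subsetT //.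
by apply/set0Pn; case/set0Pn: t0 => x _; exists x; rewrite inE.
Qed.

Definition step_cover (s : {set X}) : {set X} -> R :=
  step_filtration s (F s) (F setT).

Lemma step_cover_id (s : {set X}) : step_cover s s = F s.
Proof. by rewrite /step_cover /step_filtration subxx. Qed.

Lemma tree_filtration_step_cover (s : {set X}) : tree_filtration (step_cover s).
Proof. exact/tree_filtration_step/filtration_le_setT. Qed.

Lemma dominates_step_cover (s : {set X}) : dominates (step_cover s) F.
Proof.
move=> t t0; rewrite /step_cover /step_filtration.
case: ifP => [ts | _]; last exact: filtration_le_setT.
apply: filtF => //; apply/set0Pn; case/set0Pn: t0 => x xt.
by exists x; apply: (subsetP ts).
Qed.

End StepDominates.

Theorem mainTheorem5 (R : realType) (X : finType) (F : {set X} -> R) :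
  filtration F ->
  (forall s : {set X}, s != set0 ->
     (exists T : {set X} -> R, [/\ tree_filtration T, dominates T F & T s = F s]) /\
     (forall T : {set X} -> R, tree_filtration T -> dominates T F -> F s <= T s)) /\
  (exists (n : nat) (Ts : 'I_n -> {set X} -> R),
     (forall i, tree_filtration (Ts i) /\ dominates (Ts i) F) /\
     (forall s : {set X}, s != set0 -> exists i, Ts i s = F s)).
Proof.
move=> filtF; split=> [s s0 | ].
  split=> [|T _ domT]; last exact: domT.
  exists (step_cover F s); split; first exact: tree_filtration_step_cover.
    exact: dominates_step_cover.
  exact: step_cover_id.
exists #|{set X}|, (fun i => step_cover F (enum_val i)); split=> [i | s _].
  by split; [exact: tree_filtration_step_cover | exact: dominates_step_cover].
by exists (enum_rank s); rewrite enum_rankK step_cover_id.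
Qed.
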